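(* Let $-A$ be the generator of a bounded $C_0$-semigroup $(T(s))_{s\ge0}$ on a Banach space $X$. Suppose $\varphi:(0,\infty)\to(0,\infty)$ satisfies $\varphi(t)\searrow0$ as $t\to\infty$ and \[\|\mathcal C_t(A)x\|=O(\varphi(t))\quad(t\to\infty)\quad\text{for every }x\in\operatorname{dom}_\infty(A):=\bigcap_{n\ge0}\operatorname{dom}(A^n).\] Then $A$ is invertible (i.e. has a bounded inverse defined on all of $X$).
   Context: Cesàro means: $\mathcal C_t(A)x=\frac1t\int_0^tT(s)x\,\mathrm ds$ for $t>0$, $x\in X$. *)

From Stdlib Require Import Reals Lra.
Open Scope R_scope.

Record Banach := {
  bcar :> Type;
  bzero : bcar;
  badd : bcar -> bcar -> bcar;
  bopp : bcar -> bcar;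
  bscal : R -> bcar -> bcar;
  bnorm : bcar -> R;
  badd_assoc : forall x y z, badd x (badd y z) = badd (badd x y) z;
  badd_comm : forall x y, badd x y = badd y x;
  badd_0 : forall x, badd bzero x = x;
  badd_opp : forall x, badd x (bopp x) = bzero;
  bscal_addr : forall a x y, bscal a (badd x y) = badd (bscal a x) (bscal a y);
  bscal_addl : forall a b x, bscal (a + b) x = badd (bscal a x) (bscal b x);
  bscal_assoc : forall a b x, bscal a (bscal b x) = bscal (a * b) x;
  bscal_1 : forall x, bscal 1 x = x;
  bnorm_nonneg : forall x, 0 <= bnorm x;
  bnorm_eq0 : forall x, bnorm x = 0 -> x = bzero;
  bnorm_scal : forall a x, bnorm (bscal a x) = Rabs a * bnorm x;
  bnorm_triangle : forall x y, bnorm (badd x y) <= bnorm x + bnorm y;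
  bcomplete : forall u : nat -> bcar,
    (forall eps, 0 < eps -> exists N, forall m n, (N <= m)%nat -> (N <= n)%nat ->
        bnorm (badd (u m) (bopp (u n))) < eps) ->
    exists l, forall eps, 0 < eps -> exists N, forall n, (N <= n)%nat ->
        bnorm (badd (u n) (bopp l)) < eps
}.

Arguments bzero {_}. Arguments badd {_}. Arguments bopp {_}.
Arguments bscal {_}. Arguments bnorm {_}.

Definition bsub {X : Banach} (x y : X) : X := badd x (bopp y).

Definition is_linear {X : Banach} (L : X -> X) : Prop :=
  (forall x y, L (badd x y) = badd (L x) (L y)) /\
  (forall a x, L (bscal a x) = bscal a (L x)).

(* Bounded C0-semigroup (T(s))_{s>=0}; T is only used on s >= 0. *)
Definition bounded_C0_semigroup {X : Banach} (T : R -> X -> X) : Prop :=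
  (forall s, 0 <= s -> is_linear (T s)) /\
  (forall x, T 0 x = x) /\
  (forall s t x, 0 <= s -> 0 <= t -> T (s + t) x = T s (T t x)) /\
  (forall x s, 0 <= s -> forall eps, 0 < eps -> exists delta, 0 < delta /\
      forall r, 0 <= r -> Rabs (r - s) < delta -> bnorm (bsub (T r x) (T s x)) < eps) /\
  (exists M, forall s x, 0 <= s -> bnorm (T s x) <= M * bnorm x).

(* gen_rel T x y : x is in dom(A) and A x = y, where -A is the generator of T,
   i.e. (T(h)x - x)/h -> -y as h -> 0+. *)
Definition gen_rel {X : Banach} (T : R -> X -> X) (x y : X) : Prop :=
  forall eps, 0 < eps -> exists delta, 0 < delta /\
    forall h, 0 < h -> h < delta ->
      bnorm (badd (bscal (/ h) (bsub (T h x) x)) y) < eps.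

Fixpoint in_dom_pow {X : Banach} (T : R -> X -> X) (n : nat) (x : X) : Prop :=
  match n with
  | O => True
  | S m => exists y, gen_rel T x y /\ in_dom_pow T m y
  end.

Definition in_dom_inf {X : Banach} (T : R -> X -> X) (x : X) : Prop :=
  forall n, in_dom_pow T n x.

Fixpoint vsum {X : Banach} (n : nat) (f : nat -> X) : X :=
  match n with
  | O => bzero
  | S m => badd (vsum m f) (f m)
  end.

Definition riemann_sum {X : Banach} (f : R -> X) (a b : R) (n : nat) : X :=
  vsum n (fun k => bscal ((b - a) / INR n) (f (a + INR k * (b - a) / INR n))).

(* v = \int_a^b f (Riemann integral; for continuous f the uniform Riemann
   sums converge to it) *)
Definition is_integral {X : Banach} (f : R -> X) (a b : R) (v : X) : Prop :=
  forall eps, 0 < eps -> exists N, forall n, (N <= n)%nat ->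
    bnorm (bsub (riemann_sum f a b n) v) < eps.

Definition cesaro {X : Banach} (T : R -> X -> X) (t : R) (x c : X) : Prop :=
  exists w, is_integral (fun s => T s x) 0 t w /\ c = bscal (/ t) w.

(* Proof.  (1) Elementary integration theory of orbits s |-> T(s)u by uniform
   Riemann sums gives V_t u = \int_0^t T(s)u ds with  T(t)x - x = -V_t(Ax)  and
   A(V_a y) = y - T(a)y.  (2) The averages P_a = V_a / a are commuting
   contractions (up to sup ||T||) mapping X into dom(A); the infinite product
   J = P_1 P_(1/2) P_(1/4) ... converges, maps X into dom_oo(A) and satisfies
   ||Jx - x|| <= c ||Ax||.  (3) The hypothesis says that the closed sets
   {z | ||C_t J z|| <= k phi(t) for t >= k} cover X, so by Baire's theorem
   ||C_t J|| <= K phi(t), hence ||C_t J|| <= 1/2 for some fixed t.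
   (4) Splitting x = (x - Jx) + (Jx - C_t Jx) + C_t Jx gives the a priori
   bound ||x|| <= c ||Ax||, so A is injective with closed range; the range
   contains every z - C_t J z, and iterating z |-> C_t J z (a contraction by
   1/2) shows the range is all of X. *)

From Stdlib Require Import Reals Lra Lia ZArith List Classical ClassicalEpsilon.
Open Scope R_scope.

Arguments badd_assoc {_}. Arguments badd_comm {_}. Arguments badd_0 {_}.
Arguments badd_opp {_}. Arguments bscal_addr {_}. Arguments bscal_addl {_}.
Arguments bscal_assoc {_}. Arguments bscal_1 {_}. Arguments bnorm_nonneg {_}.
Arguments bnorm_eq0 {_}. Arguments bnorm_scal {_}. Arguments bnorm_triangle {_}.
Arguments bcomplete {_}.

(* Vector-space identities in a Banach space, and a decision procedure for
   them: an expression in +, -, scalar multiplication and 0 over finitely many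
   atoms equals sum_i c_i * atom_i, so two expressions are equal as soon as
   their coefficients agree as real numbers. *)
Section ModuleIdentities.
Context {X : Banach}.
Implicit Types x y z : X.

Lemma badd_0r x : badd x bzero = x.
Proof. rewrite badd_comm; apply badd_0. Qed.

Lemma badd_cancel_l x y z : badd x y = badd x z -> y = z.
Proof.
  intros H. rewrite <- (badd_0 y), <- (badd_0 z).
  rewrite <- (badd_opp x), (badd_comm x (bopp x)), <- !badd_assoc, H; reflexivity.
Qed.

Lemma bscal_0l x : bscal 0 x = bzero.
Proof.
  apply (badd_cancel_l (bscal 0 x)). rewrite <- bscal_addl, Rplus_0_r, badd_0r; reflexivity.
Qed.

Lemma bscal_0r a : bscal a (@bzero X) = bzero.
Proof.
  apply (badd_cancel_l (bscal a bzero)). rewrite <- bscal_addr, badd_0, badd_0r; reflexivity.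
Qed.

Lemma bopp_eq x : bopp x = bscal (-1) x.
Proof.
  apply (badd_cancel_l x). rewrite badd_opp.
  rewrite <- (bscal_1 x) at 1. rewrite <- bscal_addl. replace (1 + -1) with 0 by ring.
  rewrite bscal_0l; reflexivity.
Qed.

Inductive vexp := VVar (n : nat) | V0 | VAdd (a b : vexp) | VOpp (a : vexp) | VScal (r : R) (a : vexp).

Fixpoint veval (env : list X) (e : vexp) : X :=
  match e with
  | VVar n => nth n env bzero
  | V0 => bzero
  | VAdd a b => badd (veval env a) (veval env b)
  | VOpp a => bopp (veval env a)
  | VScal r a => bscal r (veval env a)
  end.

Fixpoint vcoef (i : nat) (e : vexp) : R :=
  match e with
  | VVar n => if Nat.eqb n i then 1 else 0
  | V0 => 0
  | VAdd a b => vcoef i a + vcoef i b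
  | VOpp a => - vcoef i a
  | VScal r a => r * vcoef i a
  end.

Lemma vsum_ext n (f g : nat -> X) : (forall i, (i < n)%nat -> f i = g i) -> vsum n f = vsum n g.
Proof.
  induction n; simpl; intros H; auto.
  rewrite IHn by (intros; apply H; lia). rewrite H by lia. reflexivity.
Qed.

Lemma vsum_add n (f g : nat -> X) : vsum n (fun i => badd (f i) (g i)) = badd (vsum n f) (vsum n g).
Proof.
  induction n; simpl. rewrite badd_0; reflexivity.
  rewrite IHn. rewrite !badd_assoc. f_equal. rewrite <- !badd_assoc. f_equal. apply badd_comm.
Qed.

Lemma vsum_scal n r (f : nat -> X) : vsum n (fun i => bscal r (f i)) = bscal r (vsum n f).
Proof.
  induction n; simpl. rewrite bscal_0r; reflexivity.
  rewrite IHn, bscal_addr; reflexivity.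
Qed.

Lemma vsum_zero n : vsum n (fun _ => @bzero X) = bzero.
Proof. induction n; simpl; auto. rewrite IHn, badd_0; reflexivity. Qed.

Lemma vsum_var n N (env : list X) :
  vsum N (fun i => bscal (if Nat.eqb n i then 1 else 0) (nth i env bzero)) =
  if Nat.ltb n N then nth n env bzero else bzero.
Proof.
  induction N; simpl. reflexivity.
  rewrite IHN. destruct (Nat.eqb n N) eqn:E.
  - apply Nat.eqb_eq in E; subst. rewrite bscal_1.
    replace (Nat.ltb N N) with false by (symmetry; apply Nat.ltb_ge; lia).
    replace (Nat.ltb N (S N)) with true by (symmetry; apply Nat.ltb_lt; lia).
    apply badd_0.
  - apply Nat.eqb_neq in E. rewrite bscal_0l, badd_0r.
    destruct (Nat.ltb n N) eqn:E2; destruct (Nat.ltb n (S N)) eqn:E3; auto.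
    + apply Nat.ltb_lt in E2; apply Nat.ltb_ge in E3; lia.
    + apply Nat.ltb_ge in E2; apply Nat.ltb_lt in E3; lia.
Qed.

Lemma veval_nf (env : list X) e :
  veval env e = vsum (length env) (fun i => bscal (vcoef i e) (nth i env bzero)).
Proof.
  induction e; simpl.
  - rewrite vsum_var. destruct (Nat.ltb n (length env)) eqn:E; auto.
    apply Nat.ltb_ge in E. rewrite nth_overflow; auto.
  - symmetry. rewrite (vsum_ext _ _ (fun _ => bzero)). apply vsum_zero.
    intros; apply bscal_0l.
  - rewrite IHe1, IHe2, <- vsum_add. apply vsum_ext; intros. symmetry; apply bscal_addl.
  - rewrite IHe, bopp_eq, <- vsum_scal. apply vsum_ext; intros.
    rewrite bscal_assoc. f_equal; ring.
  - rewrite IHe, <- vsum_scal. apply vsum_ext; intros. rewrite bscal_assoc; reflexivity.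
Qed.

Fixpoint allcoef (N : nat) (e1 e2 : vexp) : Prop :=
  match N with O => True | S k => vcoef k e1 = vcoef k e2 /\ allcoef k e1 e2 end.

Lemma veval_sound (env : list X) e1 e2 : allcoef (length env) e1 e2 -> veval env e1 = veval env e2.
Proof.
  intros H. rewrite !veval_nf. apply vsum_ext.
  revert H. generalize (length env). induction n; simpl; intros [H1 H2] i Hi || (intros; lia).
  destruct (Nat.eq_dec i n). subst; rewrite H1; auto. apply IHn; auto; lia.
Qed.

End ModuleIdentities.

Ltac vadd_atom t l :=
  match l with
  | context [cons t _] => l
  | _ => constr:(cons t l)
  end.

Ltac vatoms t l :=
  lazymatch t with
  | badd ?a ?b => let l1 := vatoms a l in vatoms b l1
  | bsub ?a ?b => let l1 := vatoms a l in vatoms b l1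
  | bopp ?a => vatoms a l
  | bscal _ ?a => vatoms a l
  | bzero => l
  | _ => vadd_atom t l
  end.

Ltac vfind t l :=
  match l with
  | cons t _ => constr:(O)
  | cons _ ?l' => let n := vfind t l' in constr:(S n)
  end.

Ltac vreify t l :=
  lazymatch t with
  | badd ?a ?b => let ea := vreify a l in let eb := vreify b l in constr:(VAdd ea eb)
  | bsub ?a ?b => let ea := vreify a l in let eb := vreify b l in constr:(VAdd ea (VOpp eb))
  | bopp ?a => let ea := vreify a l in constr:(VOpp ea)
  | bscal ?r ?a => let ea := vreify a l in constr:(VScal r ea)
  | bzero => constr:(V0)
  | _ => let n := vfind t l in constr:(VVar n)
  end.

(* Proves an equation between vector expressions; the coefficient equations
   are closed by [ring], or by [field] leaving nonzero-denominator goals. *)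
Ltac module_eq :=
  match goal with
  | |- @eq (bcar ?X) ?lhs ?rhs =>
    let l0 := vatoms lhs (@nil (bcar X)) in
    let l := vatoms rhs l0 in
    let e1 := vreify lhs l in
    let e2 := vreify rhs l in
    change (veval l e1 = veval l e2); apply veval_sound;
    cbv [allcoef vcoef length Nat.eqb]; repeat split; first [ring | field]
  end.

Section NormsAndLimits.
Context {X : Banach}.
Implicit Types x y z : X.

Lemma bnorm_zero : bnorm (@bzero X) = 0.
Proof. rewrite <- (bscal_0l bzero), bnorm_scal, Rabs_R0; ring. Qed.

Lemma bnorm_opp x : bnorm (bopp x) = bnorm x.
Proof. rewrite bopp_eq, bnorm_scal, Rabs_left by lra. ring. Qed.

Lemma bnorm_scal_pos a x : 0 <= a -> bnorm (bscal a x) = a * bnorm x.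
Proof. intros Ha. rewrite bnorm_scal, Rabs_pos_eq; auto. Qed.

Lemma bnorm_sub_sym x y : bnorm (bsub x y) = bnorm (bsub y x).
Proof. replace (bsub x y) with (bopp (bsub y x)) by module_eq. apply bnorm_opp. Qed.

Lemma bnorm_sub_tri x y z : bnorm (bsub x z) <= bnorm (bsub x y) + bnorm (bsub y z).
Proof. replace (bsub x z) with (badd (bsub x y) (bsub y z)) by module_eq. apply bnorm_triangle. Qed.

Lemma bnorm_sub_le x y : bnorm (bsub x y) <= bnorm x + bnorm y.
Proof. unfold bsub. rewrite <- (bnorm_opp y). apply bnorm_triangle. Qed.

Lemma bsub_eq0 x y : bnorm (bsub x y) = 0 -> x = y.
Proof. intros H. apply bnorm_eq0 in H. replace x with (badd (bsub x y) y) by module_eq. rewrite H, badd_0; auto. Qed.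

Lemma bnorm_le_eps x : (forall eps, 0 < eps -> bnorm x <= eps) -> x = bzero.
Proof.
  intros H. apply bnorm_eq0. pose proof (bnorm_nonneg x).
  destruct (Req_dec (bnorm x) 0); auto. specialize (H (bnorm x / 2)). lra.
Qed.

Lemma vsum_const n x : vsum n (fun _ => x) = bscal (INR n) x.
Proof.
  induction n. simpl. rewrite bscal_0l; auto.
  cbn [vsum]. rewrite IHn, S_INR, bscal_addl, bscal_1; auto.
Qed.

Lemma vsum_norm_le n (f : nat -> X) c :
  (forall k, (k < n)%nat -> bnorm (f k) <= c) -> bnorm (vsum n f) <= INR n * c.
Proof.
  induction n; intros H. simpl; rewrite bnorm_zero; lra.
  cbn [vsum]. eapply Rle_trans. apply bnorm_triangle.
  rewrite S_INR. specialize (IHn (fun k Hk => H k ltac:(lia))). specialize (H n ltac:(lia)). lra.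
Qed.

Lemma vsum_split a b (f : nat -> X) : vsum (a + b) f = badd (vsum a f) (vsum b (fun j => f (a + j)%nat)).
Proof.
  induction b; simpl. rewrite Nat.add_0_r, badd_0r; auto.
  rewrite Nat.add_succ_r. simpl. rewrite IHb. symmetry; apply badd_assoc.
Qed.

Lemma vsum_double n m (f : nat -> X) :
  vsum (n * m) f = vsum n (fun k => vsum m (fun j => f (k * m + j)%nat)).
Proof.
  induction n; simpl. auto.
  replace (m + n * m)%nat with (n * m + m)%nat by lia.
  rewrite vsum_split, IHn. auto.
Qed.

Lemma vsum_sub n (f g : nat -> X) : vsum n (fun i => bsub (f i) (g i)) = bsub (vsum n f) (vsum n g).
Proof. induction n; simpl. module_eq. rewrite IHn. module_eq. Qed.

Lemma vsum_telescope n (g : nat -> X) : vsum n (fun k => bsub (g (S k)) (g k)) = bsub (g n) (g O).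
Proof. induction n; simpl. module_eq. rewrite IHn. module_eq. Qed.

Lemma vsum_shift n m (f : nat -> X) :
  bsub (vsum n (fun k => f (k + m)%nat)) (vsum n f) = bsub (vsum m (fun k => f (n + k)%nat)) (vsum m f).
Proof.
  pose proof (vsum_split m n f) as H1. pose proof (vsum_split n m f) as H2.
  rewrite Nat.add_comm in H1. rewrite H1 in H2.
  rewrite (vsum_ext n (fun k => f (k + m)%nat) (fun j => f (m + j)%nat)) by (intros; f_equal; lia).
  set (A := vsum n (fun j => f (m + j)%nat)) in *. set (B := vsum m (fun j => f (n + j)%nat)) in *.
  replace A with (bsub (badd (vsum m f) A) (vsum m f)) by module_eq. rewrite H2. module_eq.
Qed.

Lemma lin_zero (L : X -> X) : is_linear L -> L bzero = bzero.
Proof.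
  intros [_ H]. replace (@bzero X) with (bscal 0 (@bzero X)) at 1 by apply bscal_0l.
  rewrite H, bscal_0l; auto.
Qed.

Lemma lin_vsum (L : X -> X) n (f : nat -> X) : is_linear L -> L (vsum n f) = vsum n (fun k => L (f k)).
Proof.
  intros HL. induction n; simpl.
  - apply lin_zero; auto.
  - rewrite (proj1 HL), IHn; auto.
Qed.

Lemma lin_sub (L : X -> X) x y : is_linear L -> L (bsub x y) = bsub (L x) (L y).
Proof. intros [H1 H2]. unfold bsub. rewrite H1, !bopp_eq, H2; auto. Qed.

Lemma lin_comp (L1 L2 : X -> X) : is_linear L1 -> is_linear L2 -> is_linear (fun x => L1 (L2 x)).
Proof. intros [A1 S1] [A2 S2]. split; intros; rewrite ?A2, ?A1, ?S2, ?S1; auto. Qed.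

Lemma lin_scal_comp c (L : X -> X) : is_linear L -> is_linear (fun x => bscal c (L x)).
Proof. intros [A S]. split; intros; rewrite ?A, ?S; module_eq. Qed.

Definition blim (u : nat -> X) (l : X) : Prop :=
  forall eps, 0 < eps -> exists N, forall n, (N <= n)%nat -> bnorm (bsub (u n) l) < eps.

Lemma blim_unique u l1 l2 : blim u l1 -> blim u l2 -> l1 = l2.
Proof.
  intros H1 H2. apply bsub_eq0. apply Rle_antisym; [|apply bnorm_nonneg].
  apply Rnot_lt_le; intros Hp.
  destruct (H1 _ (ltac:(lra) : 0 < bnorm (bsub l1 l2) / 2)) as [N1 HN1].
  destruct (H2 _ (ltac:(lra) : 0 < bnorm (bsub l1 l2) / 2)) as [N2 HN2].
  specialize (HN1 (N1 + N2)%nat ltac:(lia)). specialize (HN2 (N1 + N2)%nat ltac:(lia)).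
  pose proof (bnorm_sub_tri l1 (u (N1 + N2)%nat) l2). rewrite (bnorm_sub_sym l1 (u (N1 + N2)%nat)) in H. lra.
Qed.

Lemma blim_le u l c e : blim u l -> (exists N0, forall n, (N0 <= n)%nat -> bnorm (bsub (u n) c) <= e) ->
  bnorm (bsub l c) <= e.
Proof.
  intros H [N0 HN0]. apply Rnot_lt_le; intros Hp.
  destruct (H _ (ltac:(lra) : 0 < bnorm (bsub l c) - e)) as [N1 HN1].
  specialize (HN1 (N0 + N1)%nat ltac:(lia)). specialize (HN0 (N0 + N1)%nat ltac:(lia)).
  pose proof (bnorm_sub_tri l (u (N0 + N1)%nat) c). rewrite (bnorm_sub_sym l (u (N0 + N1)%nat)) in H0. lra.
Qed.

Lemma blim_norm_le u l c : blim u l -> (exists N0, forall n, (N0 <= n)%nat -> bnorm (u n) <= c) -> bnorm l <= c.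
Proof.
  intros H [N0 HN]. replace l with (bsub l bzero) by module_eq.
  apply (blim_le u); auto. exists N0; intros. replace (bsub (u n) bzero) with (u n) by module_eq. auto.
Qed.

Lemma blim_ext u v l : (exists N0, forall n, (N0 <= n)%nat -> u n = v n) -> blim u l -> blim v l.
Proof.
  intros [N0 H0] H eps He. destruct (H eps He) as [N HN]. exists (N0 + N)%nat; intros n Hn.
  rewrite <- H0 by lia. apply HN; lia.
Qed.

Lemma blim_Lip (L : X -> X) K u l : (forall a b, bnorm (bsub (L a) (L b)) <= K * bnorm (bsub a b)) ->
  blim u l -> blim (fun n => L (u n)) (L l).
Proof.
  intros HL H eps He.
  destruct (H (eps / (Rabs K + 1))) as [N HN]. apply Rdiv_lt_0_compat; [lra| pose proof (Rabs_pos K); lra].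
  exists N; intros n Hn. specialize (HN n Hn). eapply Rle_lt_trans. apply HL.
  pose proof (Rabs_pos K). pose proof (Rle_abs K). pose proof (bnorm_nonneg (bsub (u n) l)).
  apply Rle_lt_trans with ((Rabs K + 1) * bnorm (bsub (u n) l)). nra.
  replace eps with ((Rabs K + 1) * (eps / (Rabs K + 1))) by (field; lra).
  apply Rmult_lt_compat_l; lra.
Qed.

Lemma blim_add u v l1 l2 : blim u l1 -> blim v l2 -> blim (fun n => badd (u n) (v n)) (badd l1 l2).
Proof.
  intros H1 H2 eps He.
  destruct (H1 (eps/2) ltac:(lra)) as [N1 HN1]. destruct (H2 (eps/2) ltac:(lra)) as [N2 HN2].
  exists (N1 + N2)%nat; intros n Hn.
  replace (bsub (badd (u n) (v n)) (badd l1 l2)) with (badd (bsub (u n) l1) (bsub (v n) l2)) by module_eq.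
  eapply Rle_lt_trans. apply bnorm_triangle. specialize (HN1 n ltac:(lia)). specialize (HN2 n ltac:(lia)). lra.
Qed.

Lemma blim_scal r u l : blim u l -> blim (fun n => bscal r (u n)) (bscal r l).
Proof.
  intros H. apply (blim_Lip (bscal r) (Rabs r)); auto.
  intros a b. replace (bsub (bscal r a) (bscal r b)) with (bscal r (bsub a b)) by module_eq.
  rewrite bnorm_scal; lra.
Qed.

Lemma blim_sub u v l1 l2 : blim u l1 -> blim v l2 -> blim (fun n => bsub (u n) (v n)) (bsub l1 l2).
Proof.
  intros H1 H2. apply blim_add; auto. rewrite bopp_eq. apply (blim_ext (fun n => bscal (-1) (v n))).
  exists O; intros; rewrite bopp_eq; auto. apply blim_scal; auto.
Qed.

Lemma blim_const x : blim (fun _ => x) x.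
Proof. intros eps He; exists O; intros. replace (bsub x x) with (@bzero X) by module_eq. rewrite bnorm_zero; auto. Qed.

Lemma blim_succ u l : blim u l -> blim (fun n => u (S n)) l.
Proof. intros H eps He. destruct (H eps He) as [N HN]. exists N; intros; apply HN; lia. Qed.

Lemma lin_limit (Ln : nat -> X -> X) (L : X -> X) :
  (forall n, is_linear (Ln n)) -> (forall y, blim (fun n => Ln n y) (L y)) -> is_linear L.
Proof.
  intros Hlin Hlim. split.
  - intros u v. apply (blim_unique (fun n => Ln n (badd u v))); auto.
    apply (blim_ext (fun n => badd (Ln n u) (Ln n v))).
    exists O; intros; symmetry; apply Hlin. apply blim_add; auto.
  - intros a u. apply (blim_unique (fun n => Ln n (bscal a u))); auto.
    apply (blim_ext (fun n => bscal a (Ln n u))).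
    exists O; intros; symmetry; apply Hlin. apply blim_scal; auto.
Qed.

Lemma cauchy_lim (u : nat -> X) :
  (forall eps, 0 < eps -> exists N, forall m n, (N <= m)%nat -> (N <= n)%nat -> bnorm (bsub (u m) (u n)) < eps) ->
  exists l, blim u l.
Proof. intros H. destruct (bcomplete u H) as [l Hl]. exists l. exact Hl. Qed.

Lemma blim_cauchy u l : blim u l ->
  forall eps, 0 < eps -> exists N, forall m n, (N <= m)%nat -> (N <= n)%nat -> bnorm (bsub (u m) (u n)) < eps.
Proof.
  intros H eps He. destruct (H (eps / 2) ltac:(lra)) as [N HN]. exists N. intros m n Hm Hn.
  pose proof (bnorm_sub_tri (u m) l (u n)). rewrite (bnorm_sub_sym l) in H0.
  pose proof (HN m Hm). pose proof (HN n Hn). lra.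
Qed.

Lemma cauchy_tail (u : nat -> X) (e : nat -> R) :
  (forall eps, 0 < eps -> exists N, e N < eps) ->
  (forall N n, (N <= n)%nat -> bnorm (bsub (u n) (u N)) <= e N) -> exists l, blim u l.
Proof.
  intros He Hu. apply cauchy_lim. intros eps Heps.
  destruct (He (eps / 2) ltac:(lra)) as [N HN]. exists N. intros m n Hm Hn.
  pose proof (bnorm_sub_tri (u m) (u N) (u n)). rewrite (bnorm_sub_sym (u N)) in H.
  pose proof (Hu N m Hm). pose proof (Hu N n Hn). lra.
Qed.

End NormsAndLimits.

Lemma inv_INR_small eps : 0 < eps -> exists N, forall n, (N <= n)%nat -> / INR (S n) < eps.
Proof.
  intros He. destruct (archimed (/ eps)) as [H1 _].
  assert (0 < / eps) by (apply Rinv_0_lt_compat; auto).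
  exists (Z.to_nat (up (/ eps))). intros n Hn.
  assert (Hz: (0 <= up (/eps))%Z) by (apply le_IZR; lra).
  assert (E: INR (Z.to_nat (up (/eps))) = IZR (up (/eps))) by (rewrite INR_IZR_INZ, Z2Nat.id; auto).
  apply le_INR in Hn. rewrite S_INR.
  rewrite <- (Rinv_inv eps). apply Rinv_lt_contravar.
  apply Rmult_lt_0_compat; [lra|]. pose proof (pos_INR n); lra.
  lra.
Qed.

Lemma mesh_small t d : 0 <= t -> 0 < d ->
  exists N, forall n, (N <= n)%nat -> 0 < INR n /\ t / INR n < d.
Proof.
  intros Ht Hd. destruct (inv_INR_small (d / (t + 1))) as [N HN]. apply Rdiv_lt_0_compat; lra.
  exists (S N). intros [|n] Hn; [lia|]. specialize (HN n ltac:(lia)).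
  assert (0 < INR (S n)) by (apply lt_0_INR; lia). split; auto.
  apply Rle_lt_trans with ((t + 1) * / INR (S n)).
  - unfold Rdiv. apply Rmult_le_compat_r. left; apply Rinv_0_lt_compat; auto. lra.
  - apply (Rmult_lt_compat_l (t + 1)) in HN; [|lra].
    replace ((t + 1) * (d / (t + 1))) with d in HN by (field; lra). exact HN.
Qed.

Definition dyad (j : nat) : R := (/ 2) ^ j.

Lemma dyad_pos j : 0 < dyad j.
Proof. unfold dyad. apply pow_lt. lra. Qed.

Lemma dyad_S j : dyad (S j) = dyad j / 2.
Proof. unfold dyad. simpl. field. Qed.

Lemma dyad_add k n : dyad (k + n) = dyad k * dyad n.
Proof. unfold dyad. apply pow_add. Qed.

Lemma dyad_small eps : 0 < eps -> exists N, forall n, (N <= n)%nat -> dyad n < eps.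
Proof.
  intros He. destruct (inv_INR_small eps He) as [N HN]. exists N; intros n Hn.
  apply Rle_lt_trans with (/ INR (S n)); [|apply HN; auto]. clear.
  induction n. unfold dyad; simpl; lra.
  rewrite dyad_S, !S_INR. rewrite S_INR in IHn. pose proof (pos_INR n).
  apply Rle_trans with (/ (INR n + 1) / 2). lra.
  unfold Rdiv. rewrite <- Rinv_mult. apply Rinv_le_contravar; lra.
Qed.

Definition nfloor (r : R) : nat := epsilon (inhabits O) (fun m => INR m <= r < INR m + 1).

Lemma nfloor_spec r : 0 <= r -> INR (nfloor r) <= r < INR (nfloor r) + 1.
Proof.
  intros Hr. unfold nfloor. apply (epsilon_spec (inhabits O) (fun m => INR m <= r < INR m + 1)).
  destruct (base_Int_part r) as [H1 H2].
  assert (Hz: (0 <= Int_part r)%Z).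
  { destruct (Z_lt_le_dec (Int_part r) 0) as [l|l]; auto. exfalso.
    assert (Int_part r <= -1)%Z by lia. apply IZR_le in H. lra. }
  exists (Z.to_nat (Int_part r)). rewrite INR_IZR_INZ, Z2Nat.id by auto. lra.
Qed.

(* Baire category theorem: if countably many sequentially closed sets cover
   a Banach space, one of them contains a ball. *)
Section Baire.
Context {X : Banach} (F : nat -> X -> Prop).
Hypothesis F_closed : forall k (zn : nat -> X) z, blim zn z -> (forall n, F k (zn n)) -> F k z.
Hypothesis F_cover : forall z, exists k, F k z.

Lemma compl_open k z : ~ F k z -> exists rho, 0 < rho /\ forall w, bnorm (bsub w z) < rho -> ~ F k w.
Proof.
  intros Hz. apply NNPP. intros Hn.
  assert (Hall: forall n : nat, exists w, bnorm (bsub w z) < / INR (S n) /\ F k w).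
  { intros n. apply NNPP. intros Hw. apply Hn. exists (/ INR (S n)). split.
    apply Rinv_0_lt_compat, lt_0_INR; lia.
    intros w Hw1 Hw2. apply Hw. exists w; auto. }
  destruct (choice _ Hall) as [wn Hwn].
  apply Hz. apply (F_closed k wn z); [|intros n; apply Hwn].
  intros eps He. destruct (inv_INR_small eps He) as [N HN]. exists N; intros n Hn'.
  eapply Rlt_trans. apply Hwn. apply HN; auto.
Qed.

(* [shrinks k (z, r) (z', r')]: the ball B(z', r') avoids F k, has at most a
   quarter of the radius of B(z, r) and its centre lies within r/2 of z *)
Definition shrinks (k : nat) (p p' : X * R) : Prop :=
  0 < snd p -> 0 < snd p' /\ snd p' <= snd p / 4 /\ bnorm (bsub (fst p') (fst p)) < snd p / 2 /\
    forall w, bnorm (bsub w (fst p')) < snd p' -> ~ F k w.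

Section NowhereDense.
Hypothesis F_thin : forall k z0 r, 0 < r -> exists z, bnorm (bsub z z0) < r /\ ~ F k z.

Lemma shrink_exists k p : exists p', shrinks k p p'.
Proof.
  destruct p as [z r]. destruct (Rlt_dec 0 r) as [Hr|Hr].
  - destruct (F_thin k z (r / 2) ltac:(lra)) as [z' [Hz1 Hz2]].
    destruct (compl_open k z' Hz2) as [rho [Hrho Hrho']].
    exists (z', Rmin rho (r / 4)). unfold shrinks; simpl. intros _. split; [|split; [|split]].
    + apply Rmin_glb_lt; lra.
    + apply Rmin_r.
    + auto.
    + intros w Hw. apply Hrho'. eapply Rlt_le_trans. apply Hw. apply Rmin_l.
  - exists (z, r). unfold shrinks; simpl. intros; lra.
Qed.

(* the n-th ball avoids F 0, ..., F (n-1) *)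
Fixpoint balls (n : nat) : X * R :=
  match n with O => (bzero, 1) | S m => epsilon (inhabits (balls m)) (shrinks m (balls m)) end.

Lemma balls_step n : shrinks n (balls n) (balls (S n)).
Proof. simpl. apply epsilon_spec, shrink_exists. Qed.

Lemma balls_radius n : 0 < snd (balls n) <= dyad n.
Proof.
  induction n. simpl; unfold dyad; simpl; lra.
  destruct (balls_step n ltac:(lra)) as [H1 [H2 _]]. rewrite dyad_S. lra.
Qed.

Lemma balls_centres j n :
  bnorm (bsub (fst (balls (n + j))) (fst (balls n))) <= 2/3 * snd (balls n) - 2/3 * snd (balls (n + j)).
Proof.
  induction j.
  - rewrite Nat.add_0_r. replace (bsub _ _) with (@bzero X) by module_eq. rewrite bnorm_zero; lra.
  - rewrite Nat.add_succ_r. eapply Rle_trans. apply (bnorm_sub_tri _ (fst (balls (n + j)))).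
    destruct (balls_step (n + j) ltac:(apply balls_radius)) as [_ [H1 [H2 _]]]. lra.
Qed.

Lemma thin_cover_absurd : False.
Proof.
  set (z := fun n => fst (balls n)).
  assert (Hc: forall N n, (N <= n)%nat -> bnorm (bsub (z n) (z N)) <= 2/3 * snd (balls N)).
  { intros N n Hn. unfold z. replace n with (N + (n - N))%nat by lia.
    pose proof (balls_centres (n - N) N). pose proof (balls_radius (N + (n - N))). lra. }
  destruct (cauchy_tail z (fun N => 2/3 * snd (balls N))) as [zs Hzs]; auto.
  { intros eps He. destruct (dyad_small eps He) as [N HN]. exists N.
    pose proof (balls_radius N). specialize (HN N (le_n N)). lra. }
  destruct (F_cover zs) as [k Hk].
  destruct (balls_step k ltac:(apply balls_radius)) as [_ [_ [_ Hout]]]. apply (Hout zs); auto.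
  assert (bnorm (bsub zs (z (S k))) <= 2/3 * snd (balls (S k))).
  { apply (blim_le z); auto. exists (S k). intros n Hn. apply Hc; auto. }
  pose proof (balls_radius (S k)). unfold z in *. lra.
Qed.

End NowhereDense.

Lemma baire_thm : exists k z0 r, 0 < r /\ forall z, bnorm (bsub z z0) < r -> F k z.
Proof.
  apply NNPP. intros Hno. apply thin_cover_absurd. intros k z0 r Hr.
  apply NNPP. intros Hn. apply Hno. exists k, z0, r. split; auto.
  intros z Hz. apply NNPP. intros Hf. apply Hn. exists z; auto.
Qed.

End Baire.

Lemma linear_ball_bound {X : Banach} (L : X -> X) z0 r c : is_linear L -> 0 < r ->
  (forall z, bnorm (bsub z z0) < r -> bnorm (L z) <= c) -> forall z, bnorm (L z) <= 4 * c / r * bnorm z.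
Proof.
  intros Hlin Hr Hball z.
  assert (B0: bnorm (L z0) <= c).
  { apply Hball. replace (bsub z0 z0) with (@bzero X) by module_eq. rewrite bnorm_zero; lra. }
  assert (Hc: 0 <= c) by (pose proof (bnorm_nonneg (L z0)); lra).
  destruct (Req_dec (bnorm z) 0) as [Hz|Hz].
  - apply bnorm_eq0 in Hz. subst z. rewrite (lin_zero _ Hlin), bnorm_zero. lra.
  - pose proof (bnorm_nonneg z). assert (Hzp: 0 < bnorm z) by lra.
    set (s := r / (2 * bnorm z)). assert (Hs: 0 < s) by (apply Rdiv_lt_0_compat; lra).
    assert (B1: bnorm (L (badd z0 (bscal s z))) <= c).
    { apply Hball. replace (bsub (badd z0 (bscal s z)) z0) with (bscal s z) by module_eq.
      rewrite bnorm_scal_pos by lra. unfold s. replace (r / (2 * bnorm z) * bnorm z) with (r / 2) by (field; lra). lra. }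
    assert (E: bscal s (L z) = bsub (L (badd z0 (bscal s z))) (L z0)).
    { rewrite (proj1 Hlin), (proj2 Hlin). module_eq. }
    assert (Hb: s * bnorm (L z) <= 2 * c).
    { rewrite <- bnorm_scal_pos, E by lra. eapply Rle_trans. apply bnorm_sub_le. lra. }
    apply (Rmult_le_reg_l s); auto.
    eapply Rle_trans. apply Hb. right. unfold s. field. lra.
Qed.

Section Semigroup.
Context {X : Banach} (T : R -> X -> X) (hT : bounded_C0_semigroup T).
Implicit Types x y z u v : X.

Lemma T_lin s : 0 <= s -> is_linear (T s).
Proof. apply hT. Qed.
Lemma T_0 x : T 0 x = x.
Proof. apply hT. Qed.
Lemma T_add s t x : 0 <= s -> 0 <= t -> T (s + t) x = T s (T t x).
Proof. apply hT. Qed.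

Definition MT : R :=
  Rmax 1 (epsilon (inhabits 0) (fun M => forall s x, 0 <= s -> bnorm (T s x) <= M * bnorm x)).

Lemma MT_ge1 : 1 <= MT.
Proof. apply Rmax_l. Qed.

Lemma T_bound s x : 0 <= s -> bnorm (T s x) <= MT * bnorm x.
Proof.
  intros Hs. unfold MT.
  pose proof (epsilon_spec (inhabits 0) (fun M => forall s x, 0 <= s -> bnorm (T s x) <= M * bnorm x)
    (proj2 (proj2 (proj2 (proj2 hT))))) as HM.
  eapply Rle_trans. apply HM; auto. apply Rmult_le_compat_r. apply bnorm_nonneg. apply Rmax_r.
Qed.

Lemma T_comm r s x : 0 <= r -> 0 <= s -> T r (T s x) = T s (T r x).
Proof. intros. rewrite <- !T_add by auto. rewrite Rplus_comm; auto. Qed.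
Lemma T_sub s x y : 0 <= s -> T s (bsub x y) = bsub (T s x) (T s y).
Proof. intros; apply lin_sub, T_lin; auto. Qed.
Lemma T_scal s a x : 0 <= s -> T s (bscal a x) = bscal a (T s x).
Proof. intros; apply T_lin; auto. Qed.
Lemma T_badd s x y : 0 <= s -> T s (badd x y) = badd (T s x) (T s y).
Proof. intros; apply T_lin; auto. Qed.
Lemma T_lip s x y : 0 <= s -> bnorm (bsub (T s x) (T s y)) <= MT * bnorm (bsub x y).
Proof. intros; rewrite <- T_sub by auto; apply T_bound; auto. Qed.

Lemma T_cont0 x eps : 0 < eps -> exists delta, 0 < delta /\ forall r, 0 <= r < delta -> bnorm (bsub (T r x) x) < eps.
Proof.
  intros He. destruct ((proj1 (proj2 (proj2 (proj2 hT)))) x 0 (Rle_refl 0) eps He) as [d [Hd H]].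
  exists d; split; auto.
  intros r Hr. rewrite <- (T_0 x) at 2. apply H. lra. rewrite Rminus_0_r, Rabs_pos_eq; lra.
Qed.

Lemma T_joint_cont (hn : nat -> R) h (un : nat -> X) u : (forall n, 0 <= hn n) -> 0 <= h ->
  Un_cv hn h -> blim un u -> blim (fun n => T (hn n) (un n)) (T h u).
Proof.
  intros Hpos Hh Hcv Hu eps He.
  destruct ((proj1 (proj2 (proj2 (proj2 hT)))) u h Hh (eps / 2) ltac:(lra)) as [d [Hd Hcont]].
  destruct (Hcv d Hd) as [N1 HN1]. pose proof MT_ge1.
  destruct (Hu (eps / (2 * MT))) as [N2 HN2]. apply Rdiv_lt_0_compat; lra.
  exists (N1 + N2)%nat. intros n Hn.
  eapply Rle_lt_trans. apply (bnorm_sub_tri _ (T (hn n) u)).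
  assert (bnorm (bsub (T (hn n) (un n)) (T (hn n) u)) <= MT * (eps / (2 * MT))).
  { eapply Rle_trans. apply T_lip; auto. apply Rmult_le_compat_l; [lra|]. left; apply HN2; lia. }
  assert (bnorm (bsub (T (hn n) u) (T h u)) < eps / 2) by (apply Hcont; auto; apply HN1; lia).
  replace (MT * (eps / (2 * MT))) with (eps / 2) in H0 by (field; lra). lra.
Qed.

Definition rsum u t n : X := vsum n (fun k => bscal (t / INR n) (T (INR k * t / INR n) u)).

Lemma rsum_eq u t n : riemann_sum (fun s => T s u) 0 t n = rsum u t n.
Proof. unfold riemann_sum, rsum. apply vsum_ext; intros. rewrite Rminus_0_r, Rplus_0_l; auto. Qed.

Lemma grid_point_bounds k n t : (k < n)%nat -> 0 <= t -> 0 <= INR k * t / INR n /\ (0 < t -> INR k * t / INR n < t).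
Proof.
  intros Hk Ht. assert (Hn: 0 < INR n) by (apply lt_0_INR; lia).
  assert (Hk': INR k < INR n) by (apply lt_INR; auto). pose proof (pos_INR k).
  split. apply Rmult_le_pos. apply Rmult_le_pos; lra. left; apply Rinv_0_lt_compat; lra.
  intros. apply (Rmult_lt_reg_r (INR n)); auto. unfold Rdiv. rewrite Rmult_assoc, Rinv_l by lra. nra.
Qed.

Lemma rsum_linear t n : 0 <= t -> is_linear (fun u => rsum u t n).
Proof.
  intros Ht. split; intros; unfold rsum.
  - rewrite <- vsum_add. apply vsum_ext; intros k Hk.
    rewrite T_badd by (apply grid_point_bounds; auto). module_eq.
  - rewrite <- vsum_scal. apply vsum_ext; intros k Hk.
    rewrite T_scal by (apply grid_point_bounds; auto). module_eq.
Qed.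

Lemma rsum_commute (L : X -> X) u t n : is_linear L -> 0 <= t ->
  (forall s, 0 <= s -> L (T s u) = T s (L u)) -> L (rsum u t n) = rsum (L u) t n.
Proof.
  intros HL Ht HT. unfold rsum. rewrite lin_vsum by auto.
  apply vsum_ext; intros k Hk. rewrite (proj2 HL). f_equal. apply HT. apply grid_point_bounds; auto.
Qed.

Lemma rsum_approx u t n v e : 0 <= t -> (1 <= n)%nat ->
  (forall s, 0 <= s < t -> bnorm (bsub (T s u) v) <= e) ->
  bnorm (bsub (rsum u t n) (bscal t v)) <= t * e.
Proof.
  intros Ht Hn H.
  assert (HnR: 0 < INR n) by (apply lt_0_INR; lia).
  assert (Hstep: 0 <= t / INR n) by (apply Rmult_le_pos; [lra| left; apply Rinv_0_lt_compat; lra]).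
  replace (bscal t v) with (vsum n (fun _ => bscal (t / INR n) v)).
  2:{ rewrite vsum_const, bscal_assoc. f_equal. field. lra. }
  unfold rsum. rewrite <- vsum_sub.
  replace (t * e) with (INR n * (t / INR n * e)) by (field; lra).
  apply vsum_norm_le. intros k Hk.
  replace (bsub (bscal (t / INR n) (T (INR k * t / INR n) u)) (bscal (t / INR n) v))
    with (bscal (t / INR n) (bsub (T (INR k * t / INR n) u) v)) by module_eq.
  rewrite bnorm_scal_pos by auto.
  destruct (grid_point_bounds k n t Hk Ht) as [H1 H2]. destruct Ht as [Ht|Ht].
  - apply Rmult_le_compat_l; [auto| apply H; auto].
  - subst. unfold Rdiv. rewrite !Rmult_0_l. lra.
Qed.

Lemma rsum_blocks u t n m : 0 <= t -> (1 <= n)%nat -> (1 <= m)%nat ->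
  rsum u t (n * m) = vsum n (fun k => T (INR k * t / INR n) (rsum u (t / INR n) m)).
Proof.
  intros Ht Hn Hm.
  assert (HnR: 0 < INR n) by (apply lt_0_INR; lia).
  assert (HmR: 0 < INR m) by (apply lt_0_INR; lia).
  unfold rsum at 1. rewrite vsum_double. apply vsum_ext; intros k Hk.
  assert (Hsk: 0 <= INR k * t / INR n) by (apply grid_point_bounds; auto).
  unfold rsum. rewrite lin_vsum by (apply T_lin; auto). apply vsum_ext; intros j Hj.
  assert (Hsj: 0 <= INR j * (t / INR n) / INR m).
  { apply grid_point_bounds; auto. apply Rmult_le_pos; [lra| left; apply Rinv_0_lt_compat; lra]. }
  rewrite T_scal, <- T_add by auto. f_equal.
  - rewrite mult_INR. field. lra.
  - f_equal. rewrite plus_INR, !mult_INR. field. lra.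
Qed.

Lemma rsum_refine u t n m w : 0 <= t -> (1 <= n)%nat -> (1 <= m)%nat ->
  (forall s, 0 <= s < t / INR n -> bnorm (bsub (T s u) u) <= w) ->
  bnorm (bsub (rsum u t n) (rsum u t (n * m))) <= t * (MT * w).
Proof.
  intros Ht Hn Hm H.
  assert (HnR: 0 < INR n) by (apply lt_0_INR; lia).
  assert (Hc: 0 <= t / INR n) by (apply Rmult_le_pos; [lra| left; apply Rinv_0_lt_compat; lra]).
  rewrite rsum_blocks by auto. unfold rsum at 1. rewrite <- vsum_sub.
  replace (t * (MT * w)) with (INR n * (MT * (t / INR n * w))) by (field; lra).
  apply vsum_norm_le. intros k Hk.
  assert (Hsk: 0 <= INR k * t / INR n) by (apply grid_point_bounds; auto).
  rewrite <- T_scal, bnorm_sub_sym by auto.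
  eapply Rle_trans. apply T_lip; auto. apply Rmult_le_compat_l. pose proof MT_ge1; lra.
  apply rsum_approx; auto.
Qed.

Lemma integral_exists u t : 0 <= t -> exists w, blim (rsum u t) w.
Proof.
  intros Ht. apply cauchy_lim. intros eps He. pose proof MT_ge1.
  set (e := eps / (2 * (t + 1) * MT)). assert (He': 0 < e) by (apply Rdiv_lt_0_compat; auto; nra).
  destruct (T_cont0 u e He') as [d [Hd Hdd]].
  destruct (mesh_small t d Ht Hd) as [N HN].
  exists (S N). intros m n Hm Hn.
  assert (Hw: forall p, (S N <= p)%nat -> forall s, 0 <= s < t / INR p -> bnorm (bsub (T s u) u) <= e).
  { intros p Hp s Hs. left. apply Hdd. destruct (HN p ltac:(lia)). lra. }
  pose proof (rsum_refine u t m n _ Ht ltac:(lia) ltac:(lia) (Hw m Hm)).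
  pose proof (rsum_refine u t n m _ Ht ltac:(lia) ltac:(lia) (Hw n Hn)).
  rewrite Nat.mul_comm in H1.
  pose proof (bnorm_sub_tri (rsum u t m) (rsum u t (m * n)) (rsum u t n)).
  rewrite (bnorm_sub_sym (rsum u t (m * n))) in H2.
  assert (t * (MT * e) < eps / 2).
  { unfold e. replace (t * (MT * (eps / (2 * (t + 1) * MT)))) with (eps / 2 * (t / (t + 1))) by (field; lra).
    assert (t / (t + 1) < 1) by (apply (Rmult_lt_reg_r (t + 1)); [lra| field_simplify; lra]).
    assert (0 <= t / (t + 1)) by (apply Rmult_le_pos; [lra| left; apply Rinv_0_lt_compat; lra]). nra. }
  lra.
Qed.

Definition orbit_int u t : X := epsilon (inhabits bzero) (blim (rsum u t)).

Lemma orbit_int_lim u t : 0 <= t -> blim (rsum u t) (orbit_int u t).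
Proof. intros Ht. unfold orbit_int. apply epsilon_spec, integral_exists; auto. Qed.

Lemma orbit_int_integral u t : 0 <= t -> is_integral (fun s => T s u) 0 t (orbit_int u t).
Proof.
  intros Ht eps He. destruct (orbit_int_lim u t Ht eps He) as [N HN]. exists N; intros n Hn.
  rewrite rsum_eq. apply HN; auto.
Qed.

Lemma orbit_int_commute (L : X -> X) K u t : is_linear L -> 0 <= t ->
  (forall a b, bnorm (bsub (L a) (L b)) <= K * bnorm (bsub a b)) ->
  (forall s w, 0 <= s -> L (T s w) = T s (L w)) -> L (orbit_int u t) = orbit_int (L u) t.
Proof.
  intros HL Ht HK HT. apply (blim_unique (rsum (L u) t)); [| apply orbit_int_lim; auto].
  apply (blim_ext (fun n => L (rsum u t n))).
  exists O; intros; apply rsum_commute; auto.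
  apply (blim_Lip L K); auto. apply orbit_int_lim; auto.
Qed.

Lemma orbit_int_linear t : 0 <= t -> is_linear (fun u => orbit_int u t).
Proof.
  intros Ht. apply (lin_limit (fun n u => rsum u t n)).
  - intros n; apply rsum_linear; auto.
  - intros u; apply orbit_int_lim; auto.
Qed.

Lemma orbit_int_approx u t v e : 0 <= t -> (forall s, 0 <= s < t -> bnorm (bsub (T s u) v) <= e) ->
  bnorm (bsub (orbit_int u t) (bscal t v)) <= t * e.
Proof.
  intros Ht H. apply (blim_le (rsum u t)). apply orbit_int_lim; auto.
  exists 1%nat; intros. apply rsum_approx; auto.
Qed.

Lemma orbit_int_bound u t : 0 <= t -> bnorm (orbit_int u t) <= t * (MT * bnorm u).
Proof.
  intros Ht. replace (orbit_int u t) with (bsub (orbit_int u t) (bscal t bzero)).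
  - apply orbit_int_approx; auto. intros s Hs. replace (bsub (T s u) bzero) with (T s u) by module_eq.
    apply T_bound; lra.
  - rewrite bscal_0r. module_eq.
Qed.

Lemma orbit_int_lip u v t : 0 <= t -> bnorm (bsub (orbit_int u t) (orbit_int v t)) <= t * MT * bnorm (bsub u v).
Proof.
  intros Ht. rewrite <- (lin_sub (fun u => orbit_int u t)) by (apply orbit_int_linear; auto).
  rewrite Rmult_assoc. apply orbit_int_bound; auto.
Qed.

Lemma orbit_int_T r u t : 0 <= r -> 0 <= t -> T r (orbit_int u t) = orbit_int (T r u) t.
Proof.
  intros Hr Ht. apply (orbit_int_commute (T r) MT); auto. apply T_lin; auto.
  intros; apply T_lip; auto. intros; apply T_comm; auto.
Qed.

(* discrete form of T(t)x - x = -\int_0^t T(s)Ax ds: over a grid of mesh h the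
   defect is controlled by how far (T(h)x - x)/h is from -y *)
Lemma rsum_gen_defect x y t n : 0 < t -> (1 <= n)%nat ->
  bnorm (badd (rsum y t n) (bsub (T t x) x))
    <= t * (MT * bnorm (badd (bscal (/ (t / INR n)) (bsub (T (t / INR n) x) x)) y)).
Proof.
  intros Ht Hn. assert (HnR: 0 < INR n) by (apply lt_0_INR; lia).
  set (h := t / INR n). assert (Hh: 0 < h) by (apply Rdiv_lt_0_compat; auto).
  set (g := fun k => T (INR k * t / INR n) x).
  replace (bsub (T t x) x) with (bsub (g n) (g O)).
  2:{ unfold g. replace (INR n * t / INR n) with t by (field; lra).
      replace (INR 0 * t / INR n) with 0 by (simpl; field; lra). rewrite T_0; auto. }
  rewrite <- vsum_telescope. unfold rsum. rewrite <- vsum_add.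
  replace (t * (MT * _)) with (INR n * (MT * (h * bnorm (badd (bscal (/ h) (bsub (T h x) x)) y))))
    by (unfold h; field; lra).
  apply vsum_norm_le. intros k Hk.
  destruct (grid_point_bounds k n t Hk ltac:(lra)) as [Hs _].
  replace (badd (bscal (t / INR n) (T (INR k * t / INR n) y)) (bsub (g (S k)) (g k)))
    with (T (INR k * t / INR n) (bscal h (badd (bscal (/ h) (bsub (T h x) x)) y))).
  2:{ unfold g. replace (INR (S k) * t / INR n) with (INR k * t / INR n + h) by (rewrite S_INR; unfold h; field; lra).
      rewrite T_add, T_scal, T_badd, T_scal, T_sub by lra. fold h. module_eq; lra. }
  eapply Rle_trans. apply T_bound; auto. rewrite bnorm_scal_pos by lra. lra.
Qed.

Lemma orbit_int_gen x y t : gen_rel T x y -> 0 <= t -> bsub (T t x) x = bopp (orbit_int y t).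
Proof.
  intros Hg [Ht|Ht].
  2:{ subst. rewrite T_0. replace (orbit_int y 0) with (@bzero X). module_eq.
      symmetry. apply bnorm_eq0, Rle_antisym; [|apply bnorm_nonneg].
      pose proof (orbit_int_bound y 0 (Rle_refl 0)). lra. }
  assert (E: bsub (orbit_int y t) (bopp (bsub (T t x) x)) = bzero).
  2:{ replace (bsub (T t x) x) with (bsub (bsub (orbit_int y t) (bopp (bsub (T t x) x))) (orbit_int y t))
        by module_eq. rewrite E. module_eq. }
  apply bnorm_le_eps. intros eps He. pose proof MT_ge1.
  destruct (Hg (eps / (t * MT))) as [d [Hd Hdd]]. apply Rdiv_lt_0_compat; auto; nra.
  apply (blim_le (rsum y t)). apply orbit_int_lim; lra.
  destruct (mesh_small t d ltac:(lra) Hd) as [N HN]. exists (S N). intros n Hn.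
  destruct (HN n ltac:(lia)) as [HnR Hmesh].
  replace (bsub (rsum y t n) (bopp (bsub (T t x) x))) with (badd (rsum y t n) (bsub (T t x) x)) by module_eq.
  eapply Rle_trans. apply rsum_gen_defect; auto; lia.
  replace eps with (t * (MT * (eps / (t * MT)))) by (field; lra).
  apply Rmult_le_compat_l; [lra|]. apply Rmult_le_compat_l; [lra|].
  left. apply Hdd; auto. apply Rdiv_lt_0_compat; auto.
Qed.

(* discrete form of T(h)V_a y - V_a y = h (T(a)y - y) + o(h), for a shift h
   that is a multiple m of the grid mesh a/n *)
Lemma rsum_shift_defect y a n m w : 0 < a -> (1 <= n)%nat ->
  (forall k, (k < m)%nat -> bnorm (bsub (T (INR k * a / INR n) y) y) <= w) ->
  bnorm (bsub (bsub (T (INR m * a / INR n) (rsum y a n)) (rsum y a n)) (bscal (INR m * a / INR n) (bsub (T a y) y)))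
    <= INR m * (a / INR n * ((MT + 1) * w)).
Proof.
  intros Ha Hn Hw. assert (HnR: 0 < INR n) by (apply lt_0_INR; lia).
  assert (Hc: 0 <= a / INR n) by (apply Rmult_le_pos; [lra| left; apply Rinv_0_lt_compat; lra]).
  assert (Hgrid: forall k, 0 <= INR k * a / INR n).
  { intros k. pose proof (pos_INR k). apply Rmult_le_pos; [nra| left; apply Rinv_0_lt_compat; lra]. }
  set (f := fun k => bscal (a / INR n) (T (INR k * a / INR n) y)).
  replace (T (INR m * a / INR n) (rsum y a n)) with (vsum n (fun k => f (k + m)%nat)).
  2:{ unfold rsum. rewrite lin_vsum by (apply T_lin; auto). apply vsum_ext; intros k Hk.
      unfold f. rewrite T_scal, <- T_add by (first [apply Hgrid | lra]). f_equal. f_equal. rewrite plus_INR. field. lra. }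
  change (rsum y a n) with (vsum n f). rewrite vsum_shift.
  replace (bscal (INR m * a / INR n) (bsub (T a y) y)) with (vsum m (fun _ => bscal (a / INR n) (bsub (T a y) y)))
    by (rewrite vsum_const, bscal_assoc; f_equal; field; lra).
  rewrite <- vsum_sub, <- vsum_sub. apply vsum_norm_le. intros k Hk.
  replace (bsub (bsub (f (n + k)%nat) (f k)) (bscal (a / INR n) (bsub (T a y) y)))
    with (bscal (a / INR n) (bsub (T a (bsub (T (INR k * a / INR n) y) y)) (bsub (T (INR k * a / INR n) y) y))).
  2:{ unfold f. rewrite T_sub, <- T_add by (first [apply Hgrid | lra]). replace (a + INR k * a / INR n) with (INR (n + k) * a / INR n)
        by (rewrite plus_INR; field; lra). module_eq; lra. }
  rewrite bnorm_scal_pos by auto. apply Rmult_le_compat_l; auto.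
  eapply Rle_trans. apply bnorm_sub_le.
  pose proof (T_bound a (bsub (T (INR k * a / INR n) y) y) ltac:(lra)). specialize (Hw k Hk).
  pose proof (bnorm_nonneg (bsub (T (INR k * a / INR n) y) y)). pose proof MT_ge1. nra.
Qed.

Lemma grid_below h a n : 0 < h -> 0 < a -> 0 < INR n ->
  let m := nfloor (h * INR n / a) in INR m * a / INR n <= h /\ h - a / INR n < INR m * a / INR n.
Proof.
  intros Hh Ha HnR m.
  assert (0 <= h * INR n / a) by (apply Rmult_le_pos; [nra| left; apply Rinv_0_lt_compat; lra]).
  destruct (nfloor_spec _ H) as [F1 F2]. fold m in F1, F2.
  split; apply (Rmult_lt_reg_r (INR n / a)) || apply (Rmult_le_reg_r (INR n / a));
    try (apply Rdiv_lt_0_compat; lra).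
  - replace (INR m * a / INR n * (INR n / a)) with (INR m) by (field; lra).
    replace (h * (INR n / a)) with (h * INR n / a) by (field; lra). lra.
  - replace (INR m * a / INR n * (INR n / a)) with (INR m) by (field; lra).
    replace ((h - a / INR n) * (INR n / a)) with (h * INR n / a - 1) by (field; lra). lra.
Qed.

Lemma blim_scal_seq (cn : nat -> R) c v : Un_cv cn c -> blim (fun n => bscal (cn n) v) (bscal c v).
Proof.
  intros Hc eps He. destruct (Hc (eps / (bnorm v + 1))) as [N HN].
  apply Rdiv_lt_0_compat; [lra| pose proof (bnorm_nonneg v); lra].
  exists N. intros n Hn. specialize (HN n Hn). unfold R_dist in HN.
  replace (bsub (bscal (cn n) v) (bscal c v)) with (bscal (cn n - c) v) by module_eq.
  rewrite bnorm_scal. pose proof (bnorm_nonneg v). pose proof (Rabs_pos (cn n - c)).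
  apply Rle_lt_trans with (Rabs (cn n - c) * (bnorm v + 1)); [nra|].
  apply Rlt_le_trans with (eps / (bnorm v + 1) * (bnorm v + 1)); [apply Rmult_lt_compat_r; lra| right; field; lra].
Qed.

Lemma orbit_int_shift y a h w : 0 < a -> 0 < h ->
  (forall s, 0 <= s < h -> bnorm (bsub (T s y) y) <= w) ->
  bnorm (bsub (bsub (T h (orbit_int y a)) (orbit_int y a)) (bscal h (bsub (T a y) y))) <= h * ((MT + 1) * w).
Proof.
  intros Ha Hh Hw.
  assert (Hw0: 0 <= w) by (eapply Rle_trans; [apply (bnorm_nonneg (bsub (T 0 y) y))| apply (Hw 0); lra]).
  set (hn := fun n : nat => INR (nfloor (h * INR (S n) / a)) * a / INR (S n)).
  assert (Hhn: forall n, 0 <= hn n <= h /\ h - a / INR (S n) < hn n).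
  { intros n. assert (0 < INR (S n)) by (apply lt_0_INR; lia).
    destruct (grid_below h a (S n) Hh Ha H) as [H1 H2]. unfold hn. split; [split|]; auto.
    apply Rmult_le_pos; [pose proof (pos_INR (nfloor (h * INR (S n) / a))); nra| left; apply Rinv_0_lt_compat; lra]. }
  assert (Hcv: Un_cv hn h).
  { intros eps He. destruct (inv_INR_small (eps / a)) as [N HN]. apply Rdiv_lt_0_compat; lra.
    exists N. intros n Hn. specialize (HN n Hn). destruct (Hhn n) as [[H1 H2] H3].
    unfold R_dist. rewrite Rabs_left1 by lra.
    apply (Rmult_lt_compat_l a) in HN; auto. replace (a * (eps / a)) with eps in HN by (field; lra). lra. }
  set (D := bsub (T a y) y).
  apply (blim_norm_le (fun n => bsub (bsub (T (hn n) (rsum y a (S n))) (rsum y a (S n))) (bscal (hn n) D))).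
  - apply blim_sub; [apply blim_sub|].
    + apply T_joint_cont; auto. intros; apply Hhn. lra. apply (blim_succ (rsum y a)).
      apply orbit_int_lim; lra.
    + apply (blim_succ (rsum y a)). apply orbit_int_lim; lra.
    + apply blim_scal_seq; auto.
  - exists O. intros n _. destruct (Hhn n) as [[H1 H2] _].
    eapply Rle_trans. apply rsum_shift_defect; auto; try lia.
    + intros k Hk. apply Hw. split.
      { pose proof (pos_INR k). apply Rmult_le_pos; [nra| left; apply Rinv_0_lt_compat, lt_0_INR; lia]. }
      apply Rlt_le_trans with (hn n); auto. unfold hn.
      apply Rmult_lt_compat_r. apply Rinv_0_lt_compat, lt_0_INR; lia.
      apply Rmult_lt_compat_r; auto. apply lt_INR; auto.
    + replace (INR _ * (a / INR (S n) * ((MT + 1) * w))) with (hn n * ((MT + 1) * w))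
        by (unfold hn; field; apply not_0_INR; lia).
      apply Rmult_le_compat_r; auto. pose proof MT_ge1; nra.
Qed.

Lemma orbit_int_in_dom y a : 0 < a -> gen_rel T (orbit_int y a) (bsub y (T a y)).
Proof.
  intros Ha eps He. pose proof MT_ge1 as HM.
  set (w := eps / (2 * (MT + 1))). assert (Hw: 0 < w) by (apply Rdiv_lt_0_compat; lra).
  destruct (T_cont0 y w Hw) as [d [Hd Hdd]].
  exists d; split; auto. intros h Hh Hhd.
  assert (B: bnorm (bsub (bsub (T h (orbit_int y a)) (orbit_int y a)) (bscal h (bsub (T a y) y))) <= h * ((MT + 1) * w)).
  { apply orbit_int_shift; auto. intros s Hs. left; apply Hdd; lra. }
  replace (badd (bscal (/ h) (bsub (T h (orbit_int y a)) (orbit_int y a))) (bsub y (T a y)))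
    with (bscal (/ h) (bsub (bsub (T h (orbit_int y a)) (orbit_int y a)) (bscal h (bsub (T a y) y)))) by (module_eq; lra).
  rewrite bnorm_scal_pos by (left; apply Rinv_0_lt_compat; lra).
  apply Rle_lt_trans with (/ h * (h * ((MT + 1) * w))).
  - apply Rmult_le_compat_l; auto. left; apply Rinv_0_lt_compat; lra.
  - unfold w. replace (/ h * (h * ((MT + 1) * (eps / (2 * (MT + 1)))))) with (eps / 2) by (field; lra). lra.
Qed.

Lemma gen_rel_sub x1 y1 x2 y2 : gen_rel T x1 y1 -> gen_rel T x2 y2 -> gen_rel T (bsub x1 x2) (bsub y1 y2).
Proof.
  intros H1 H2 eps He.
  destruct (H1 (eps/2) ltac:(lra)) as [d1 [Hd1 Hd1']]. destruct (H2 (eps/2) ltac:(lra)) as [d2 [Hd2 Hd2']].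
  exists (Rmin d1 d2); split. apply Rmin_glb_lt; auto. intros h Hh Hhd.
  assert (h < d1) by (eapply Rlt_le_trans; [apply Hhd| apply Rmin_l]).
  assert (h < d2) by (eapply Rlt_le_trans; [apply Hhd| apply Rmin_r]).
  rewrite T_sub by lra.
  replace (badd (bscal (/ h) (bsub (bsub (T h x1) (T h x2)) (bsub x1 x2))) (bsub y1 y2))
    with (bsub (badd (bscal (/ h) (bsub (T h x1) x1)) y1) (badd (bscal (/ h) (bsub (T h x2) x2)) y2)) by module_eq.
  eapply Rle_lt_trans. apply bnorm_sub_le.
  specialize (Hd1' h Hh H). specialize (Hd2' h Hh H0). lra.
Qed.

Lemma gen_rel_scal c x y : gen_rel T x y -> gen_rel T (bscal c x) (bscal c y).
Proof.
  intros H eps He.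
  destruct (H (eps / (Rabs c + 1))) as [d [Hd Hd']]. apply Rdiv_lt_0_compat; [lra| pose proof (Rabs_pos c); lra].
  exists d; split; auto. intros h Hh Hhd.
  rewrite T_scal by lra.
  replace (badd (bscal (/ h) (bsub (bscal c (T h x)) (bscal c x))) (bscal c y))
    with (bscal c (badd (bscal (/ h) (bsub (T h x) x)) y)) by module_eq.
  rewrite bnorm_scal. specialize (Hd' h Hh Hhd). pose proof (Rabs_pos c).
  pose proof (bnorm_nonneg (badd (bscal (/ h) (bsub (T h x) x)) y)).
  assert ((Rabs c + 1) * (eps / (Rabs c + 1)) = eps) by (field; lra).
  assert (0 < eps / (Rabs c + 1)) by (apply Rdiv_lt_0_compat; lra). nra.
Qed.

Lemma gen_rel_zero : gen_rel T bzero bzero.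
Proof.
  intros eps He. exists 1; split; [lra|]. intros h Hh _.
  rewrite (lin_zero (T h)) by (apply T_lin; lra).
  replace (badd (bscal (/ h) (bsub (@bzero X) bzero)) bzero) with (@bzero X) by module_eq.
  rewrite bnorm_zero; auto.
Qed.

Lemma gen_bound x y s : gen_rel T x y -> 0 <= s -> bnorm (bsub (T s x) x) <= s * (MT * bnorm y).
Proof. intros H Hs. rewrite (orbit_int_gen x y s H Hs), bnorm_opp. apply orbit_int_bound; auto. Qed.

Lemma gen_closed (xn yn : nat -> X) x y : blim xn x -> blim yn y -> (forall n, gen_rel T (xn n) (yn n)) -> gen_rel T x y.
Proof.
  intros Hx Hy Hg.
  assert (E: forall h, 0 < h -> bsub (T h x) x = bopp (orbit_int y h)).
  { intros h Hh. apply (blim_unique (fun n => bsub (T h (xn n)) (xn n))).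
    - apply blim_sub; auto. apply (blim_Lip (T h) MT); auto. intros; apply T_lip; lra.
    - apply (blim_ext (fun n => bopp (orbit_int (yn n) h))).
      exists O; intros; symmetry; apply orbit_int_gen; auto; lra.
      apply (blim_Lip (fun u => bopp (orbit_int u h)) (h * MT)); auto.
      intros a b. replace (bsub (bopp (orbit_int a h)) (bopp (orbit_int b h)))
        with (bsub (orbit_int b h) (orbit_int a h)) by module_eq.
      rewrite (bnorm_sub_sym a b). apply orbit_int_lip; lra. }
  intros eps He. destruct (T_cont0 y (eps/2) ltac:(lra)) as [d [Hd Hdd]].
  exists d; split; auto. intros h Hh Hhd. rewrite E by auto.
  replace (badd (bscal (/ h) (bopp (orbit_int y h))) y) with (bscal (/ h) (bsub (bscal h y) (orbit_int y h)))
    by (module_eq; lra).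
  rewrite bnorm_scal_pos, bnorm_sub_sym by (left; apply Rinv_0_lt_compat; lra).
  assert (bnorm (bsub (orbit_int y h) (bscal h y)) <= h * (eps / 2)).
  { apply orbit_int_approx; [lra|]. intros s Hs. left; apply Hdd; lra. }
  apply Rle_lt_trans with (/ h * (h * (eps / 2))).
  - apply Rmult_le_compat_l; auto. left; apply Rinv_0_lt_compat; lra.
  - replace (/ h * (h * (eps / 2))) with (eps / 2) by (field; lra). lra.
Qed.

Definition avg (a : R) (y : X) : X := bscal (/ a) (orbit_int y a).

Lemma avg_cesaro t u : 0 < t -> cesaro T t u (avg t u).
Proof. intros Ht. exists (orbit_int u t). split; auto. apply orbit_int_integral; lra. Qed.

Lemma avg_linear a : 0 < a -> is_linear (avg a).
Proof. intros Ha. apply lin_scal_comp, orbit_int_linear; lra. Qed.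

Lemma avg_bound a y : 0 < a -> bnorm (avg a y) <= MT * bnorm y.
Proof.
  intros Ha. unfold avg. rewrite bnorm_scal_pos by (left; apply Rinv_0_lt_compat; lra).
  apply Rle_trans with (/ a * (a * (MT * bnorm y))).
  - apply Rmult_le_compat_l. left; apply Rinv_0_lt_compat; lra. apply orbit_int_bound; lra.
  - right; field; lra.
Qed.

Lemma avg_lip a y1 y2 : 0 < a -> bnorm (bsub (avg a y1) (avg a y2)) <= MT * bnorm (bsub y1 y2).
Proof. intros Ha. rewrite <- lin_sub by (apply avg_linear; auto). apply avg_bound; auto. Qed.

Lemma avg_T r a y : 0 <= r -> 0 < a -> T r (avg a y) = avg a (T r y).
Proof. intros Hr Ha. unfold avg. rewrite T_scal, orbit_int_T by lra. auto. Qed.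

Lemma avg_in_dom a y : 0 < a -> gen_rel T (avg a y) (bscal (/ a) (bsub y (T a y))).
Proof. intros Ha. apply gen_rel_scal, orbit_int_in_dom; auto. Qed.

Lemma avg_comm a b y : 0 < a -> 0 < b -> avg b (avg a y) = avg a (avg b y).
Proof.
  intros Ha Hb. unfold avg at 2 3. rewrite (proj2 (avg_linear b Hb)).
  rewrite (orbit_int_commute (avg b) MT); auto. apply avg_linear; auto. lra.
  intros; apply avg_lip; auto. intros; symmetry; apply avg_T; auto.
Qed.

Lemma avg_near a x y : 0 < a -> gen_rel T x y -> bnorm (bsub (avg a x) x) <= a * (MT * bnorm y).
Proof.
  intros Ha Hg.
  assert (H: bnorm (bsub (orbit_int x a) (bscal a x)) <= a * (a * (MT * bnorm y))).
  { apply orbit_int_approx; [lra|]. intros s Hs. eapply Rle_trans. apply (gen_bound x y s Hg); lra.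
    apply Rmult_le_compat_r. pose proof MT_ge1; pose proof (bnorm_nonneg y); nra. lra. }
  unfold avg. replace (bsub (bscal (/ a) (orbit_int x a)) x) with (bscal (/ a) (bsub (orbit_int x a) (bscal a x)))
    by (module_eq; lra).
  rewrite bnorm_scal_pos by (left; apply Rinv_0_lt_compat; lra).
  apply Rle_trans with (/ a * (a * (a * (MT * bnorm y)))).
  - apply Rmult_le_compat_l; auto. left; apply Rinv_0_lt_compat; lra.
  - right; field; lra.
Qed.

(* averaging does not increase the supremum of an orbit; this is what keeps
   the products of averages below uniformly bounded *)
Lemma avg_orbit_bound a y c : 0 < a -> (forall r, 0 <= r -> bnorm (T r y) <= c) ->
  forall r, 0 <= r -> bnorm (T r (avg a y)) <= c.
Proof.
  intros Ha H r Hr. rewrite avg_T by auto. unfold avg.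
  assert (B: bnorm (bsub (orbit_int (T r y) a) (bscal a bzero)) <= a * c).
  { apply orbit_int_approx; [lra|]. intros s Hs. replace (bsub (T s (T r y)) bzero) with (T s (T r y)) by module_eq.
    rewrite <- T_add by lra. apply H; lra. }
  rewrite bscal_0r in B. replace (bsub (orbit_int (T r y) a) bzero) with (orbit_int (T r y) a) in B by module_eq.
  rewrite bnorm_scal_pos by (left; apply Rinv_0_lt_compat; lra).
  apply Rle_trans with (/ a * (a * c)).
  - apply Rmult_le_compat_l; auto. left; apply Rinv_0_lt_compat; lra.
  - right; field; lra.
Qed.

Fixpoint avgs (k n : nat) (y : X) : X :=
  match n with O => y | S n' => avg (dyad k) (avgs (S k) n' y) end.

Lemma avgs_succ k n y : avgs k (S n) y = avgs k n (avg (dyad (k + n)) y).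
Proof.
  revert k. induction n; intros k. simpl. rewrite Nat.add_0_r; auto.
  change (avgs k (S (S n)) y) with (avg (dyad k) (avgs (S k) (S n) y)). rewrite IHn.
  rewrite <- Nat.add_succ_comm. auto.
Qed.

Lemma avgs_linear k n : is_linear (avgs k n).
Proof.
  revert k. induction n; intros k; simpl. split; auto.
  apply (lin_comp (avg (dyad k)) (avgs (S k) n)); auto. apply avg_linear, dyad_pos.
Qed.

Lemma avgs_T k n r y : 0 <= r -> T r (avgs k n y) = avgs k n (T r y).
Proof. revert k. induction n; intros k Hr; simpl; auto. rewrite avg_T, IHn by (auto; apply dyad_pos). auto. Qed.

Lemma avgs_avg k n b y : 0 < b -> avg b (avgs k n y) = avgs k n (avg b y).
Proof. revert k. induction n; intros k Hb; simpl; auto. rewrite avg_comm, IHn by (auto; apply dyad_pos). auto. Qed.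

Lemma avgs_bound k n y : bnorm (avgs k n y) <= MT * bnorm y.
Proof.
  assert (H: forall k n r, 0 <= r -> bnorm (T r (avgs k n y)) <= MT * bnorm y).
  { intros k' n'. revert k'. induction n'; intros k'; simpl.
    - intros; apply T_bound; auto.
    - apply avg_orbit_bound. apply dyad_pos. apply IHn'. }
  rewrite <- (T_0 (avgs k n y)). apply H; lra.
Qed.

Definition Cstep : R := MT * MT * (1 + MT).

Lemma avgs_step k n y : bnorm (bsub (avgs k (S n) y) (avgs k n y)) <= Cstep * dyad n * bnorm y.
Proof.
  pose proof MT_ge1 as HM. pose proof (bnorm_nonneg y) as Hy. unfold Cstep.
  destruct n.
  - simpl. replace (dyad 0) with 1 by (unfold dyad; simpl; auto). eapply Rle_trans. apply bnorm_sub_le.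
    pose proof (avg_bound (dyad k) y (dyad_pos k)). assert (1 <= MT * MT) by nra.
    assert (1 + MT <= MT * MT * (1 + MT)) by nra. nra.
  - rewrite avgs_succ. cbn [avgs].
    set (b := dyad (k + S n)). assert (Hb: 0 < b) by apply dyad_pos.
    rewrite <- avgs_avg by auto. set (u := avgs (S k) n y). rewrite avg_comm by (auto; apply dyad_pos).
    eapply Rle_trans. apply (avg_near b _ _ Hb (avg_in_dom (dyad k) u (dyad_pos k))).
    pose proof (dyad_pos k). pose proof (dyad_pos (S n)).
    assert (Hu: bnorm u <= MT * bnorm y) by apply avgs_bound.
    assert (Hz: bnorm (bscal (/ dyad k) (bsub u (T (dyad k) u))) <= / dyad k * ((1 + MT) * (MT * bnorm y))).
    { rewrite bnorm_scal_pos by (left; apply Rinv_0_lt_compat; lra).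
      apply Rmult_le_compat_l. left; apply Rinv_0_lt_compat; lra.
      eapply Rle_trans. apply bnorm_sub_le. pose proof (T_bound (dyad k) u ltac:(lra)).
      pose proof (bnorm_nonneg u). nra. }
    apply Rle_trans with (b * (MT * (/ dyad k * ((1 + MT) * (MT * bnorm y))))).
    { apply Rmult_le_compat_l; [lra|]. apply Rmult_le_compat_l; [lra|]. auto. }
    right. unfold b. rewrite dyad_add. field. lra.
Qed.

Lemma avgs_tail k n j y : bnorm (bsub (avgs k (n + j) y) (avgs k n y)) <= 2 * Cstep * bnorm y * (dyad n - dyad (n + j)).
Proof.
  induction j.
  - rewrite Nat.add_0_r. replace (bsub (avgs k n y) (avgs k n y)) with (@bzero X) by module_eq.
    rewrite bnorm_zero. lra.
  - rewrite Nat.add_succ_r. eapply Rle_trans. apply (bnorm_sub_tri _ (avgs k (n + j) y)).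
    pose proof (avgs_step k (n + j) y). rewrite dyad_S. lra.
Qed.

Definition smooth (k : nat) (y : X) : X := epsilon (inhabits bzero) (blim (fun n => avgs k n y)).

Lemma smooth_lim k y : blim (fun n => avgs k n y) (smooth k y).
Proof.
  unfold smooth. apply epsilon_spec.
  apply (cauchy_tail _ (fun N => 2 * Cstep * bnorm y * dyad N)).
  - intros eps He. pose proof MT_ge1. pose proof (bnorm_nonneg y).
    assert (HC: 0 <= 2 * Cstep * bnorm y) by (unfold Cstep; apply Rmult_le_pos; nra).
    destruct (dyad_small (eps / (2 * Cstep * bnorm y + 1))) as [N HN].
    apply Rdiv_lt_0_compat; lra. exists N. specialize (HN N (le_n N)). pose proof (dyad_pos N).
    apply Rle_lt_trans with ((2 * Cstep * bnorm y + 1) * dyad N); [nra|].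
    apply (Rmult_lt_compat_l (2 * Cstep * bnorm y + 1)) in HN; [|lra].
    replace ((2 * Cstep * bnorm y + 1) * (eps / (2 * Cstep * bnorm y + 1))) with eps in HN by (field; lra). lra.
  - intros N n Hn. replace n with (N + (n - N))%nat by lia.
    pose proof (avgs_tail k N (n - N) y). pose proof (dyad_pos (N + (n - N))).
    pose proof MT_ge1. pose proof (bnorm_nonneg y).
    assert (0 <= 2 * Cstep * bnorm y) by (unfold Cstep; apply Rmult_le_pos; nra). nra.
Qed.

Lemma smooth_rec k y : smooth k y = avg (dyad k) (smooth (S k) y).
Proof.
  apply (blim_unique (fun n => avgs k (S n) y)). apply (blim_succ (fun n => avgs k n y)), smooth_lim.
  apply (blim_Lip _ MT). intros; apply avg_lip, dyad_pos. apply smooth_lim.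
Qed.

Lemma smooth_linear k : is_linear (smooth k).
Proof. apply (lin_limit (avgs k)). intros; apply avgs_linear. intros; apply smooth_lim. Qed.

Lemma smooth_T k r y : 0 <= r -> T r (smooth k y) = smooth k (T r y).
Proof.
  intros Hr. apply (blim_unique (fun n => avgs k n (T r y))); [|apply smooth_lim].
  apply (blim_ext (fun n => T r (avgs k n y))). exists O; intros; apply avgs_T; auto.
  apply (blim_Lip _ MT). intros; apply T_lip; auto. apply smooth_lim.
Qed.

Lemma smooth_bound k y : bnorm (smooth k y) <= MT * bnorm y.
Proof. apply (blim_norm_le (fun n => avgs k n y)). apply smooth_lim. exists O; intros; apply avgs_bound. Qed.

Lemma smooth_lip k y1 y2 : bnorm (bsub (smooth k y1) (smooth k y2)) <= MT * bnorm (bsub y1 y2).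
Proof. rewrite <- lin_sub by apply smooth_linear. apply smooth_bound. Qed.

Lemma smooth_near x y : gen_rel T x y -> bnorm (bsub (smooth 0 x) x) <= 2 * (MT * (MT * bnorm y)).
Proof.
  intros Hg. apply (blim_le (fun n => avgs 0 n x)). apply smooth_lim. exists O. intros n _.
  pose proof MT_ge1. pose proof (bnorm_nonneg y). assert (0 <= MT * (MT * bnorm y)) by nra.
  cut (bnorm (bsub (avgs 0 n x) x) <= 2 * (MT * (MT * bnorm y)) * (1 - dyad n)).
  { intros H2. pose proof (dyad_pos n). nra. }
  induction n.
  - simpl. replace (bsub x x) with (@bzero X) by module_eq. rewrite bnorm_zero. unfold dyad; simpl; lra.
  - eapply Rle_trans. apply (bnorm_sub_tri _ (avgs 0 n x)).
    rewrite avgs_succ. simpl Nat.add. rewrite <- lin_sub by apply avgs_linear.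
    eapply Rle_trans. apply Rplus_le_compat_r. apply avgs_bound.
    pose proof (avg_near (dyad n) x y (dyad_pos n) Hg). rewrite dyad_S. nra.
Qed.

Definition dquot (k : nat) (y : X) : X := bscal (/ dyad k) (bsub y (T (dyad k) y)).

Lemma smooth_in_dom k y : gen_rel T (smooth k y) (smooth (S k) (dquot k y)).
Proof.
  rewrite smooth_rec. unfold dquot.
  rewrite (proj2 (smooth_linear (S k))), (lin_sub (smooth (S k))) by apply smooth_linear.
  rewrite <- smooth_T by (left; apply dyad_pos). apply avg_in_dom, dyad_pos.
Qed.

Lemma smooth_dom_inf k y : in_dom_inf T (smooth k y).
Proof.
  intros n. revert k y. induction n; intros k y; simpl; auto.
  exists (smooth (S k) (dquot k y)). split. apply smooth_in_dom. apply IHn.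
Qed.

Definition in_range (y : X) : Prop := exists x, gen_rel T x y.

Lemma range_sub y1 y2 : in_range y1 -> in_range y2 -> in_range (bsub y1 y2).
Proof. intros [x1 H1] [x2 H2]. exists (bsub x1 x2). apply gen_rel_sub; auto. Qed.
Lemma range_scal c y : in_range y -> in_range (bscal c y).
Proof. intros [x H]. exists (bscal c x). apply gen_rel_scal; auto. Qed.
Lemma range_zero : in_range bzero.
Proof. exists bzero. apply gen_rel_zero. Qed.
Lemma range_add y1 y2 : in_range y1 -> in_range y2 -> in_range (badd y1 y2).
Proof.
  intros. replace (badd y1 y2) with (bsub y1 (bscal (-1) y2)) by module_eq.
  apply range_sub; auto. apply range_scal; auto.
Qed.
Lemma range_vsum n f : (forall k, (k < n)%nat -> in_range (f k)) -> in_range (vsum n f).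
Proof. induction n; simpl; intros H. apply range_zero. apply range_add. apply IHn; auto. apply H; lia. Qed.

(* T(s)y - y = -A(V_s y) *)
Lemma range_T s y : 0 <= s -> in_range (bsub (T s y) y).
Proof.
  intros [Hs|Hs].
  - replace (bsub (T s y) y) with (bscal (-1) (bsub y (T s y))) by module_eq.
    apply range_scal. exists (orbit_int y s). apply orbit_int_in_dom; auto.
  - subst. rewrite T_0. replace (bsub y y) with (@bzero X) by module_eq. apply range_zero.
Qed.

(* Under an a priori bound ||x|| <= cb ||Ax||, the range of A is closed and
   therefore contains every y - P_a y and y - J_0 y. *)
Section ClosedRange.
Context (cb : R) (Hcb : forall x y, gen_rel T x y -> bnorm x <= cb * bnorm y).

Lemma range_closed (yn : nat -> X) y : blim yn y -> (forall n, in_range (yn n)) -> in_range y.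
Proof.
  intros Hy HR. destruct (choice _ HR) as [xn Hxn].
  destruct (cauchy_lim xn) as [x Hx].
  { intros eps He. pose proof (Rabs_pos cb). pose proof (Rle_abs cb).
    destruct (blim_cauchy yn y Hy (eps / (Rabs cb + 1))) as [N HN]. apply Rdiv_lt_0_compat; lra.
    exists N; intros m n Hm Hn. specialize (HN m n Hm Hn).
    pose proof (Hcb _ _ (gen_rel_sub _ _ _ _ (Hxn m) (Hxn n))) as H1.
    pose proof (bnorm_nonneg (bsub (yn m) (yn n))).
    apply Rle_lt_trans with (Rabs cb * bnorm (bsub (yn m) (yn n))); [nra|].
    apply Rle_lt_trans with ((Rabs cb + 1) * bnorm (bsub (yn m) (yn n))); [nra|].
    apply (Rmult_lt_compat_l (Rabs cb + 1)) in HN; [|lra].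
    replace ((Rabs cb + 1) * (eps / (Rabs cb + 1))) with eps in HN by (field; lra). exact HN. }
  exists x. apply (gen_closed xn yn); auto.
Qed.

Lemma range_orbit_int y t : 0 <= t -> in_range (bsub (orbit_int y t) (bscal t y)).
Proof.
  intros Ht. apply (range_closed (fun n => bsub (rsum y t (S n)) (bscal t y))).
  - apply (blim_sub (fun n => rsum y t (S n)) (fun _ => bscal t y)).
    apply (blim_succ (rsum y t)), orbit_int_lim; auto. apply blim_const.
  - intros n. assert (HnR: 0 < INR (S n)) by (apply lt_0_INR; lia).
    replace (bscal t y) with (vsum (S n) (fun _ => bscal (t / INR (S n)) y)).
    2:{ rewrite vsum_const, bscal_assoc. f_equal. field. lra. }
    unfold rsum. rewrite <- vsum_sub. apply range_vsum. intros k Hk.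
    replace (bsub (bscal (t / INR (S n)) (T (INR k * t / INR (S n)) y)) (bscal (t / INR (S n)) y))
      with (bscal (t / INR (S n)) (bsub (T (INR k * t / INR (S n)) y) y)) by module_eq.
    apply range_scal, range_T, grid_point_bounds; auto.
Qed.

Lemma range_avg a y : 0 < a -> in_range (bsub y (avg a y)).
Proof.
  intros Ha. replace (bsub y (avg a y)) with (bscal (- / a) (bsub (orbit_int y a) (bscal a y)))
    by (unfold avg; module_eq; lra).
  apply range_scal, range_orbit_int; lra.
Qed.

Lemma range_smooth y : in_range (bsub y (smooth 0 y)).
Proof.
  assert (Havgs: forall n k z, in_range (bsub z (avgs k n z))).
  { induction n; intros k z.
    - simpl. replace (bsub z z) with (@bzero X) by module_eq. apply range_zero.
    - rewrite avgs_succ. set (a := dyad (k + n)).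
      replace (bsub z (avgs k n (avg a z))) with (badd (bsub z (avg a z)) (bsub (avg a z) (avgs k n (avg a z))))
        by module_eq.
      apply range_add; auto. apply range_avg, dyad_pos. }
  apply (range_closed (fun n => bsub y (avgs 0 n y))); auto.
  apply blim_sub. apply blim_const. apply smooth_lim.
Qed.

(* if z - L z is in the range for all z and L halves norms, the range is
   everything: y = sum_n (L^n y - L^(n+1) y) *)
Lemma range_full (L : X -> X) y : (forall z, in_range (bsub z (L z))) ->
  (forall z, bnorm (L z) <= / 2 * bnorm z) -> in_range y.
Proof.
  intros H1 H2.
  set (Lp := fix Lp (n : nat) : X := match n with O => y | S m => L (Lp m) end).
  assert (A1: forall n, in_range (bsub y (Lp n))).
  { induction n; simpl. replace (bsub y y) with (@bzero X) by module_eq. apply range_zero.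
    replace (bsub y (L (Lp n))) with (badd (bsub y (Lp n)) (bsub (Lp n) (L (Lp n)))) by module_eq.
    apply range_add; auto. }
  assert (A2: forall n, bnorm (Lp n) <= dyad n * bnorm y).
  { induction n; simpl. unfold dyad; simpl; lra. eapply Rle_trans. apply H2. rewrite dyad_S. lra. }
  apply (range_closed (fun n => bsub y (Lp n))); auto.
  assert (HL: blim Lp bzero).
  2:{ pose proof (blim_sub _ _ _ _ (blim_const y) HL) as H. replace (bsub y bzero) with y in H by module_eq. exact H. }
  intros eps He. pose proof (bnorm_nonneg y).
  destruct (dyad_small (eps / (bnorm y + 1))) as [N HN]. apply Rdiv_lt_0_compat; lra.
  exists N; intros n Hn. replace (bsub (Lp n) bzero) with (Lp n) by module_eq.
  eapply Rle_lt_trans. apply A2. specialize (HN n Hn). pose proof (dyad_pos n).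
  apply Rle_lt_trans with (dyad n * (bnorm y + 1)). nra.
  apply (Rmult_lt_compat_r (bnorm y + 1)) in HN; [|lra].
  replace (eps / (bnorm y + 1) * (bnorm y + 1)) with eps in HN by (field; lra). lra.
Qed.

End ClosedRange.

Section CesaroDecay.
Context (phi : R -> R)
  (hphi_pos : forall t, 0 < t -> 0 < phi t)
  (hphi_lim : forall eps, 0 < eps -> exists t0, forall t, t0 <= t -> phi t < eps)
  (hrate : forall x, in_dom_inf T x ->
     exists C t0, 0 < t0 /\ forall t c, t0 <= t -> cesaro T t x c -> bnorm c <= C * phi t).

(* the level sets covering X in the Baire argument *)
Definition decay_level (k : nat) (z : X) : Prop :=
  forall t, INR k <= t -> 0 < t -> bnorm (avg t (smooth 0 z)) <= INR k * phi t.

Lemma decay_level_closed k (zn : nat -> X) z : blim zn z -> (forall n, decay_level k (zn n)) -> decay_level k z.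
Proof.
  intros Hz HF t Ht1 Ht2. apply (blim_norm_le (fun n => avg t (smooth 0 (zn n)))); [|exists O; intros n _; apply HF; auto].
  apply (blim_Lip (fun u => avg t (smooth 0 u)) (MT * MT)); auto.
  intros a b. eapply Rle_trans. apply avg_lip; auto. pose proof MT_ge1.
  rewrite Rmult_assoc. apply Rmult_le_compat_l. lra. apply smooth_lip.
Qed.

Lemma decay_level_cover z : exists k, decay_level k z.
Proof.
  destruct (hrate (smooth 0 z) (smooth_dom_inf 0 z)) as [C [t0 [Ht0 Hb]]].
  destruct (nfloor_spec (Rabs C + t0)) as [_ Hk]. pose proof (Rabs_pos C); lra.
  exists (S (nfloor (Rabs C + t0))). intros t Ht1 Ht2. rewrite S_INR in *.
  eapply Rle_trans. apply (Hb t). pose proof (Rabs_pos C); lra. apply avg_cesaro; auto.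
  apply Rmult_le_compat_r. left; apply hphi_pos; auto. pose proof (Rle_abs C); lra.
Qed.

(* Baire: some level set contains a ball, which by linearity bounds C_t J_0 *)
Lemma cesaro_smooth_uniform : exists K k, forall z t, INR k <= t -> 0 < t ->
  bnorm (avg t (smooth 0 z)) <= K * phi t * bnorm z.
Proof.
  destruct (baire_thm decay_level decay_level_closed decay_level_cover) as [k [z0 [r [Hr Hball]]]].
  exists (4 * INR k / r), k. intros z t Ht1 Ht2.
  replace (4 * INR k / r * phi t) with (4 * (INR k * phi t) / r) by (field; lra).
  apply (linear_ball_bound (fun u => avg t (smooth 0 u)) z0); auto.
  - apply lin_comp. apply avg_linear; auto. apply smooth_linear.
  - intros w Hw. apply Hball; auto.
Qed.

Lemma contraction_time : exists t, 0 < t /\ forall z, bnorm (avg t (smooth 0 z)) <= / 2 * bnorm z.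
Proof.
  destruct cesaro_smooth_uniform as [K [k Hub]].
  destruct (hphi_lim (/ (2 * (Rabs K + 1)))) as [t0 Ht0]. apply Rinv_0_lt_compat; pose proof (Rabs_pos K); lra.
  set (t := Rmax (Rmax (INR k) 1) t0).
  assert (Ht1: INR k <= t) by (unfold t; eapply Rle_trans; [apply Rmax_l| apply Rmax_l]).
  assert (Ht2: 1 <= t) by (unfold t; eapply Rle_trans; [apply Rmax_r| apply Rmax_l]).
  assert (Ht3: t0 <= t) by (unfold t; apply Rmax_r).
  exists t. split; [lra|]. intros z.
  specialize (Ht0 t Ht3). pose proof (hphi_pos t ltac:(lra)). pose proof (Rabs_pos K). pose proof (Rle_abs K).
  assert (Hphi: K * phi t <= / 2).
  { apply Rle_trans with (Rabs K * / (2 * (Rabs K + 1))). nra.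
    apply (Rmult_le_reg_r (2 * (Rabs K + 1))). lra. rewrite Rmult_assoc, Rinv_l by lra. lra. }
  eapply Rle_trans. apply Hub; auto; lra. pose proof (bnorm_nonneg z). nra.
Qed.

End CesaroDecay.

(* With C_t J_0 halving norms: x = (x - J_0 x) + (J_0 x - C_t J_0 x) + C_t J_0 x
   bounds ||x|| by a multiple of ||Ax|| *)
Lemma a_priori_bound t : 0 < t -> (forall z, bnorm (avg t (smooth 0 z)) <= / 2 * bnorm z) ->
  exists cb, forall x y, gen_rel T x y -> bnorm x <= cb * bnorm y.
Proof.
  intros Ht Hhalf. exists (2 * (2 * (MT * (MT * 1)) + t * (MT * (MT * MT)))).
  intros x y Hg. pose proof MT_ge1 as HM.
  set (w := smooth 0 x). set (v := smooth 1 (dquot 0 x)).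
  assert (Hv: bnorm v <= MT * (MT * bnorm y)).
  { eapply Rle_trans. apply smooth_bound. apply Rmult_le_compat_l. lra.
    unfold dquot. replace (dyad 0) with 1 by (unfold dyad; simpl; auto). rewrite Rinv_1, bscal_1.
    rewrite bnorm_sub_sym. eapply Rle_trans. apply (gen_bound x y 1 Hg); lra. lra. }
  pose proof (smooth_near x y Hg) as H1. fold w in H1.
  pose proof (avg_near t w v Ht (smooth_in_dom 0 x)) as H2.
  pose proof (Hhalf x) as H3. fold w in H3.
  pose proof (bnorm_sub_tri x w (avg t w)). rewrite (bnorm_sub_sym x w), (bnorm_sub_sym w (avg t w)) in H.
  assert (bnorm x <= bnorm (bsub x (avg t w)) + bnorm (avg t w)).
  { replace x with (badd (bsub x (avg t w)) (avg t w)) at 1 by module_eq. apply bnorm_triangle. }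
  pose proof (bnorm_nonneg x). pose proof (bnorm_nonneg y).
  assert (t * (MT * bnorm v) <= t * (MT * (MT * (MT * bnorm y)))).
  { apply Rmult_le_compat_l. lra. apply Rmult_le_compat_l. lra. auto. }
  nra.
Qed.

(* A is onto: its range is closed and contains z - C_t J_0 z, and C_t J_0 halves norms *)
Lemma gen_onto t cb : 0 < t -> (forall z, bnorm (avg t (smooth 0 z)) <= / 2 * bnorm z) ->
  (forall x y, gen_rel T x y -> bnorm x <= cb * bnorm y) -> forall y, in_range y.
Proof.
  intros Ht Hhalf Hcb y. apply (range_full cb Hcb (fun z => avg t (smooth 0 z))); auto. intros z.
  replace (bsub z (avg t (smooth 0 z))) with
    (badd (bsub z (smooth 0 z)) (bsub (smooth 0 z) (avg t (smooth 0 z)))) by module_eq.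
  apply range_add; [apply (range_smooth cb Hcb) | apply (range_avg cb Hcb); auto].
Qed.

End Semigroup.

Theorem theoremA1 (X : Banach) (T : R -> X -> X) (phi : R -> R)
  (hT : bounded_C0_semigroup T)
  (hphi_pos : forall t, 0 < t -> 0 < phi t)
  (hphi_mono : forall s t, 0 < s -> s <= t -> phi t <= phi s)
  (hphi_lim : forall eps, 0 < eps -> exists t0, forall t, t0 <= t -> phi t < eps)
  (hrate : forall x, in_dom_inf T x ->
     exists C t0, 0 < t0 /\ forall t c, t0 <= t -> cesaro T t x c ->
        bnorm c <= C * phi t) :
  exists B : X -> X,
    is_linear B /\
    (exists M, forall y, bnorm (B y) <= M * bnorm y) /\
    (forall y, gen_rel T (B y) y) /\
    (forall x y, gen_rel T x y -> B y = x).
Proof.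
  destruct (contraction_time T hT phi hphi_pos hphi_lim hrate) as [t [Ht Hhalf]].
  destruct (a_priori_bound T hT t Ht Hhalf) as [cb Hcb].
  destruct (choice _ (gen_onto T hT t cb Ht Hhalf Hcb)) as [B HB].
  (* A is injective by the a priori bound, so B is its inverse *)
  assert (Hinv: forall x y, gen_rel T x y -> B y = x).
  { intros x y Hg. pose proof (Hcb _ _ (gen_rel_sub T hT _ _ _ _ (HB y) Hg)) as H.
    replace (bsub y y) with (@bzero X) in H by module_eq. rewrite bnorm_zero, Rmult_0_r in H.
    apply bsub_eq0. pose proof (bnorm_nonneg (bsub (B y) x)). lra. }
  exists B. split; [|split; [|split]]; auto.
  - split; intros; apply Hinv.
    + replace (badd (B x) (B y)) with (bsub (B x) (bscal (-1) (B y))) by module_eq.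
      replace (badd x y) with (bsub x (bscal (-1) y)) by module_eq.
      apply gen_rel_sub; auto. apply gen_rel_scal; auto.
    + apply gen_rel_scal; auto.
  - exists cb. intros y. apply Hcb; auto.
Qed.
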